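(* Let $M\in\mathbb{R}^{n\times n}$ be real symmetric with spectral decomposition $M=\sum_{i=1}^n\lambda_iu_iu_i^T$, where $\lambda_1>\cdots>\lambda_n$ are simple and $u_1,\dots,u_n$ are orthonormal. Let $p\in(0,1)$, let $Q$ be the random symmetric matrix with independent entries $Q_{ij}$ ($i\le j$) equal to $1/p$ with probability $p$ and $0$ otherwise, let $S=M\circ Q$ and $E=S-M$. Fix $k$ and let $(\lambda_k(S),v_k)$ be the $k$-th eigenpair of $S$ and $(\lambda_k,u_k)$ the $k$-th eigenpair of $M$. Let $$R_k=\sum_{j\ne k}\frac{1}{\lambda_j-\lambda_k}u_ju_j^T,\qquad \Delta_k=R_k\big(E-(\lambda_k(S)-\lambda_k)\mathrm{Id}\big),$$ and let $d_k$ be the distance from $\lambda_k$ to the nearest other eigenvalue of $M$. If $\|E\|_2<d_k/2$, then, with $v_k$ normalized so that $v_k^Tu_k=1$, for every integer $j\ge0$, $$\Big\|v_k-u_k+\Big[\sum_{m=0}^j(-1)^m\Delta_k^m\Big]R_kEu_k\Big\|_2\le\frac12\Big(\frac{2\|E\|_2}{d_k}\Big)^{j+2}\frac{1}{1-\frac{2\|E\|_2}{d_k}}.$$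
   Context: $\|\cdot\|_2$ denotes the spectral norm for matrices and Euclidean norm for vectors; $\circ$ is the Hadamard product. *)

From HB Require Import structures.
From mathcomp Require Import all_boot all_order all_algebra.
From mathcomp Require Import classical_sets reals.
Set Implicit Arguments. Unset Strict Implicit. Unset Printing Implicit Defensive.
Import Order.TTheory GRing.Theory Num.Theory.
Local Open Scope ring_scope.
Local Open Scope classical_set_scope.

Definition vnorm (R : realType) (n : nat) (x : 'cV[R]_n) : R :=
  Num.sqrt (\sum_(i < n) (x i 0) ^+ 2).

Definition specnorm (R : realType) (m n : nat) (A : 'M[R]_(m, n)) : R :=
  sup [set vnorm (A *m x) | x in [set x : 'cV[R]_n | vnorm x = 1]].

Definition hadamard (R : realType) (m n : nat) (A B : 'M[R]_(m, n)) : 'M[R]_(m, n) :=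
  map2_mx (fun a b => a * b) A B.

Definition eig_gap (R : realType) (n : nat) (lam : 'I_n -> R) (k : 'I_n) : R :=
  inf [set `|lam j - lam k| | j in [set j : 'I_n | j != k]].

From HB Require Import structures.
From mathcomp Require Import all_boot all_order all_algebra.
From mathcomp Require Import classical_sets reals.
From mathcomp Require Import lra ring.
Set Implicit Arguments. Unset Strict Implicit. Unset Printing Implicit Defensive.
Import Order.TTheory GRing.Theory Num.Theory.
Local Open Scope ring_scope.

(* Put x := v - u_k.  Since R_k (lambda_k - M) = u_k u_k^T - Id and
   u_k^T v = 1, the eigen-equation S v = lambda_k(S) v becomes the fixed-point
   equation x = - R_k E u_k - Delta_k x; unrolling it j + 1 times leaves the
   remainder (-Delta_k)^(j+1) x.  Weyl's inequality |lambda_k(S) - lambda_k|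
   <= |E| (proved by a Courant-Fischer dimension count) gives
   |Delta_k| <= 2|E|/d_k =: q < 1, hence |x| <= |R_k E u_k| / (1 - q)
   <= (q/2) / (1 - q). *)

Section InnerProduct.
Variables (R : realType) (n : nat).
Implicit Types (x y z : 'cV[R]_n) (c : R).

Definition dot x y : R := \sum_(i < n) x i 0 * y i 0.

Lemma dotC x y : dot x y = dot y x.
Proof. by apply: eq_bigr => i _; rewrite mulrC. Qed.

Lemma dotDr x y z : dot x (y + z) = dot x y + dot x z.
Proof. by rewrite /dot -big_split; apply: eq_bigr => i _; rewrite mxE mulrDr. Qed.

Lemma dotZr c x y : dot x (c *: y) = c * dot x y.
Proof. by rewrite /dot mulr_sumr; apply: eq_bigr => i _; rewrite mxE mulrCA. Qed.

Lemma dotNr x y : dot x (- y) = - dot x y.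
Proof. by rewrite -scaleN1r dotZr mulN1r. Qed.

Lemma dotBr x y z : dot x (y - z) = dot x y - dot x z.
Proof. by rewrite dotDr dotNr. Qed.

Lemma dot0r x : dot x 0 = 0.
Proof. by rewrite -(scale0r 0) dotZr mul0r. Qed.

Lemma dot_sumr (I : finType) x (F : I -> 'cV[R]_n) :
  dot x (\sum_i F i) = \sum_i dot x (F i).
Proof.
rewrite /dot exchange_big /=; apply: eq_bigr => i _.
by rewrite summxE mulr_sumr.
Qed.

Lemma dotDl x y z : dot (y + z) x = dot y x + dot z x.
Proof. by rewrite dotC dotDr !(dotC x). Qed.

Lemma dotZl c x y : dot (c *: y) x = c * dot y x.
Proof. by rewrite dotC dotZr dotC. Qed.

Lemma dotNl x y : dot (- y) x = - dot y x.
Proof. by rewrite dotC dotNr dotC. Qed.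

Lemma dot_ge0 x : 0 <= dot x x.
Proof. by apply: sumr_ge0 => i _; rewrite -expr2 sqr_ge0. Qed.

Lemma dot_eq0 x : dot x x = 0 -> x = 0.
Proof.
move=> /psumr_eq0P x0; apply/matrixP => i j; rewrite ord1 mxE.
apply/eqP; rewrite -[_ == 0]orbb -mulf_eq0 x0 // => t _.
by rewrite -expr2 sqr_ge0.
Qed.

Lemma trmx_mul_dot x y : x^T *m y = (dot x y)%:M.
Proof.
apply/matrixP => i j; rewrite !ord1 !mxE /= /dot mulr1n.
by apply: eq_bigr => l _; rewrite mxE.
Qed.

Lemma dot_sqr_le x y : dot x y ^+ 2 <= dot x x * dot y y.
Proof.
have [x0|xn0] := eqVneq (dot x x) 0.
  by rewrite (dot_eq0 x0) dotC !dot0r expr0n mul0r.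
have xx_gt0 : 0 < dot x x by rewrite lt0r xn0 dot_ge0.
set a := dot x x; set b := dot x y.
have := dot_ge0 (a *: y - b *: x).
rewrite !(dotDl, dotDr, dotZl, dotZr, dotNl, dotNr) -/a -/b (dotC y x) -/b => h.
have : 0 <= a * (a * dot y y - b ^+ 2) by move: h; congr (0 <= _); ring.
by rewrite pmulr_rge0 // subr_ge0.
Qed.

Lemma vnormE x : vnorm x = Num.sqrt (dot x x).
Proof. by rewrite /vnorm /dot; congr Num.sqrt; apply: eq_bigr => i _; rewrite expr2. Qed.

Lemma vnorm_ge0 x : 0 <= vnorm x.
Proof. by rewrite vnormE sqrtr_ge0. Qed.

Lemma vnorm_sqr x : vnorm x ^+ 2 = dot x x.
Proof. by rewrite vnormE sqr_sqrtr // dot_ge0. Qed.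

Lemma vnorm0 : vnorm (0 : 'cV[R]_n) = 0.
Proof. by rewrite vnormE dot0r sqrtr0. Qed.

Lemma vnorm_gt0 x : x != 0 -> 0 < vnorm x.
Proof.
move=> xn0; rewrite lt0r vnorm_ge0 andbT; apply: contra xn0 => /eqP x0.
by apply/eqP/dot_eq0; rewrite -vnorm_sqr x0 expr0n.
Qed.

Lemma normr_dot_le x y : `|dot x y| <= vnorm x * vnorm y.
Proof.
rewrite -ler_sqr ?nnegrE ?mulr_ge0 ?vnorm_ge0 //.
by rewrite exprMn !vnorm_sqr real_normK ?num_real // dot_sqr_le.
Qed.

Lemma vnorm_le_dot x y c :
  0 <= c -> dot x x <= c ^+ 2 * dot y y -> vnorm x <= c * vnorm y.
Proof.
move=> c0 h; rewrite !vnormE -[c]ger0_norm // -sqrtr_sqr -sqrtrM ?sqr_ge0 //.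
by rewrite ler_sqrt // mulr_ge0 ?sqr_ge0 ?dot_ge0.
Qed.

Lemma vnormD x y : vnorm (x + y) <= vnorm x + vnorm y.
Proof.
rewrite -ler_sqr ?nnegrE ?addr_ge0 ?vnorm_ge0 //.
rewrite vnorm_sqr sqrrD !vnorm_sqr !(dotDl, dotDr) (dotC y x).
have := normr_dot_le x y; have := ler_norm (dot x y); lra.
Qed.

Lemma vnormZ c x : vnorm (c *: x) = `|c| * vnorm x.
Proof. by rewrite !vnormE dotZl dotZr mulrA -expr2 sqrtrM ?sqr_ge0 // sqrtr_sqr. Qed.

Lemma vnormN x : vnorm (- x) = vnorm x.
Proof. by rewrite -scaleN1r vnormZ normrN1 mul1r. Qed.

Lemma vnormB x y : vnorm (x - y) <= vnorm x + vnorm y.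
Proof. by rewrite -(vnormN y) vnormD. Qed.

End InnerProduct.
Section OrthonormalBasis.
Variables (R : realType) (n : nat) (a : 'I_n -> 'cV[R]_n).
Hypothesis a_orthonormal : forall i j, (a i)^T *m a j = (i == j)%:R%:M.
Implicit Types (y z : 'cV[R]_n) (al : 'I_n -> R).

Lemma dot_orthonormal i j : dot (a i) (a j) = (i == j)%:R.
Proof.
have := a_orthonormal i j; rewrite trmx_mul_dot => /matrixP/(_ 0 0).
by rewrite !mxE /= !mulr1n.
Qed.

Lemma sum_outer_orthonormal : \sum_i a i *m (a i)^T = 1%:M.
Proof.
pose A : 'M[R]_n := \matrix_(r, i) a i r 0.
have AtA : A^T *m A = 1%:M.
  apply/matrixP => i j; rewrite !mxE -dot_orthonormal /dot.
  by apply: eq_bigr => l _; rewrite !mxE.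
rewrite -(mulmx1C AtA); apply/matrixP => r s; rewrite summxE !mxE.
by apply: eq_bigr => i _; rewrite !mxE big_ord1 !mxE.
Qed.

Lemma orthonormal_expansion z : z = \sum_i dot (a i) z *: a i.
Proof.
rewrite -{1}(mul1mx z) -sum_outer_orthonormal mulmx_suml.
by apply: eq_bigr => i _; rewrite -mulmxA trmx_mul_dot mul_mx_scalar.
Qed.

Lemma orthonormal_coord_inj y z : (forall i, dot (a i) y = dot (a i) z) -> y = z.
Proof.
move=> yz; rewrite (orthonormal_expansion y) (orthonormal_expansion z).
by apply: eq_bigr => i _; rewrite yz.
Qed.

Lemma parseval z : dot z z = \sum_i dot (a i) z ^+ 2.
Proof.
rewrite {2}(orthonormal_expansion z) dot_sumr; apply: eq_bigr => i _.
by rewrite dotZr dotC expr2.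
Qed.

Lemma spectral_mulmx (P : pred 'I_n) al z :
  (\sum_(i | P i) al i *: (a i *m (a i)^T)) *m z
  = \sum_(i | P i) (al i * dot (a i) z) *: a i.
Proof.
rewrite mulmx_suml; apply: eq_bigr => i _.
by rewrite -scalemxAl -mulmxA trmx_mul_dot mul_mx_scalar scalerA.
Qed.

Lemma dot_spectral_mulmx (P : pred 'I_n) al z j :
  dot (a j) ((\sum_(i | P i) al i *: (a i *m (a i)^T)) *m z)
  = (if P j then al j else 0) * dot (a j) z.
Proof.
rewrite spectral_mulmx big_mkcond dot_sumr (bigD1 j) //= big1 ?addr0 => [|i ij].
  by case: (P j); rewrite ?dotZr ?dot_orthonormal ?eqxx ?mulr1 ?dot0r ?mul0r.
by case: (P i); rewrite ?dot0r // dotZr dot_orthonormal eq_sym (negbTE ij) mulr0.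
Qed.

Lemma dot_spectral_quad al y :
  dot y ((\sum_i al i *: (a i *m (a i)^T)) *m y) = \sum_i al i * dot (a i) y ^+ 2.
Proof.
rewrite spectral_mulmx dot_sumr; apply: eq_bigr => i _.
by rewrite dotZr dotC expr2 mulrA.
Qed.

Lemma vnorm_spectral_mulmx_le (P : pred 'I_n) al c z :
  0 <= c -> (forall i, P i -> `|al i| <= c) ->
  vnorm ((\sum_(i | P i) al i *: (a i *m (a i)^T)) *m z) <= c * vnorm z.
Proof.
move=> c0 alc; apply: vnorm_le_dot => //.
rewrite parseval (parseval z) mulr_sumr; apply: ler_sum => i _.
rewrite dot_spectral_mulmx exprMn ler_wpM2r ?sqr_ge0 //.
case: ifP => Pi; last by rewrite expr0n /= sqr_ge0.
by rewrite -real_normK ?num_real // ler_sqr ?nnegrE ?alc.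
Qed.

End OrthonormalBasis.

Section SpectralNorm.
Variables (R : realType) (m n : nat) (A : 'M[R]_(m, n)) (e : 'cV[R]_n).
Hypothesis e_unit : vnorm e = 1.

Lemma specnorm_has_sup :
  has_sup [set vnorm (A *m x) | x in [set x : 'cV[R]_n | vnorm x = 1]].
Proof.
split; first by exists (vnorm (A *m e)); exists e.
exists (Num.sqrt (\sum_i dot (row i A)^T (row i A)^T)) => _ [x /= x1 <-].
rewrite vnormE ler_sqrt; last by apply: sumr_ge0 => i _; apply: dot_ge0.
apply: ler_sum => i _.
have -> : (A *m x) i 0 = dot (row i A)^T x.
  by rewrite mxE /dot; apply: eq_bigr => l _; rewrite !mxE.
by rewrite -expr2; have := dot_sqr_le (row i A)^T x; rewrite -(vnorm_sqr x) x1 expr1n mulr1.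
Qed.

Lemma specnorm_ge0 : 0 <= specnorm A.
Proof.
apply: le_trans (vnorm_ge0 (A *m e)) _.
by apply: sup_upper_bound specnorm_has_sup _ _; exists e.
Qed.

Lemma vnorm_mulmx_le y : vnorm (A *m y) <= specnorm A * vnorm y.
Proof.
have [->|yn0] := eqVneq y 0; first by rewrite mulmx0 !vnorm0 mulr0.
have y_gt0 := vnorm_gt0 yn0.
rewrite -ler_pdivrMr //; apply: sup_upper_bound specnorm_has_sup _ _.
exists ((vnorm y)^-1 *: y) => /=.
  by rewrite vnormZ ger0_norm ?invr_ge0 ?vnorm_ge0 // mulVf // gt_eqF.
by rewrite -scalemxAr vnormZ ger0_norm ?invr_ge0 ?vnorm_ge0 // mulrC.
Qed.

End SpectralNorm.

Lemma normr_dot_mulmx_le (R : realType) (n : nat) (A : 'M[R]_n) (e y : 'cV[R]_n) :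
  vnorm e = 1 -> `|dot y (A *m y)| <= specnorm A * dot y y.
Proof.
move=> e1; apply: le_trans (normr_dot_le _ _) _.
rewrite -vnorm_sqr expr2 mulrCA ler_wpM2l ?vnorm_ge0 //.
exact: (vnorm_mulmx_le A e1 y).
Qed.

Section Rayleigh.
Variables (R : realType) (n : nat) (k : 'I_n).
Implicit Types (a b : 'I_n -> 'cV[R]_n).

Lemma exists_orthogonal_tail_head a b : exists2 y : 'cV[R]_n, y != 0 &
  (forall i : 'I_n, (k < i)%N -> dot (a i) y = 0) /\
  (forall i : 'I_n, (i < k)%N -> dot (b i) y = 0).
Proof.
(* The n - 1 constraints form the columns of a matrix whose k-th column is
   zero; a nonzero vector of its left kernel does the job. *)
pose B : 'M[R]_n := \matrix_(i, j) (if (k < j)%N then a j i 0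
                                    else if (j < k)%N then b j i 0 else 0).
have : \det B == 0.
  by rewrite (expand_det_col B k) big1 // => i _; rewrite mxE ltnn mul0r.
case/det0P => r rn0 /matrixP rB; exists r^T.
  by apply: contra rn0 => /eqP r0; rewrite -[r]trmxK r0 trmx0.
split=> i ik; have := rB 0 i; rewrite !mxE /dot => /(eq_trans _); apply.
  by apply: eq_bigr => l _; rewrite !mxE ik mulrC.
have ki : (k < i)%N = false by apply/negbTE; rewrite -leqNgt ltnW.
by apply: eq_bigr => l _; rewrite !mxE ki ik mulrC.
Qed.

Variables (a : 'I_n -> 'cV[R]_n) (al : 'I_n -> R).
Hypothesis a_orthonormal : forall i j, (a i)^T *m a j = (i == j)%:R%:M.
Hypothesis al_noninc : forall i j : 'I_n, (i <= j)%N -> al j <= al i.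
Let A := \sum_i al i *: (a i *m (a i)^T).

Lemma rayleigh_ge y : (forall i : 'I_n, (k < i)%N -> dot (a i) y = 0) ->
  al k * dot y y <= dot y (A *m y).
Proof.
move=> ya; rewrite dot_spectral_quad (parseval a_orthonormal) mulr_sumr.
apply: ler_sum => i _; case: (ltnP k i) => ki; first by rewrite ya // expr0n /= !mulr0.
by rewrite ler_wpM2r ?sqr_ge0 ?al_noninc.
Qed.

Lemma rayleigh_le y : (forall i : 'I_n, (i < k)%N -> dot (a i) y = 0) ->
  dot y (A *m y) <= al k * dot y y.
Proof.
move=> ya; rewrite dot_spectral_quad (parseval a_orthonormal) mulr_sumr.
apply: ler_sum => i _; case: (ltnP i k) => ik; first by rewrite ya // expr0n /= !mulr0.
by rewrite ler_wpM2r ?sqr_ge0 ?al_noninc.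
Qed.

End Rayleigh.

Section Weyl.
Variables (R : realType) (n : nat) (k : 'I_n).
Variables (a b : 'I_n -> 'cV[R]_n) (al be : 'I_n -> R) (e : R).
Hypothesis a_orthonormal : forall i j, (a i)^T *m a j = (i == j)%:R%:M.
Hypothesis al_noninc : forall i j : 'I_n, (i <= j)%N -> al j <= al i.
Hypothesis b_orthonormal : forall i j, (b i)^T *m b j = (i == j)%:R%:M.
Hypothesis be_noninc : forall i j : 'I_n, (i <= j)%N -> be j <= be i.
Let A := \sum_i al i *: (a i *m (a i)^T).
Let B := \sum_i be i *: (b i *m (b i)^T).
Hypothesis BA_quad : forall y, `|dot y ((B - A) *m y)| <= e * dot y y.

Lemma weyl_lower_bound : al k - e <= be k.
Proof.
have [y yn0 [ya yb]] := exists_orthogonal_tail_head k a b.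
have yy_gt0 : 0 < dot y y by rewrite -vnorm_sqr exprn_gt0 // vnorm_gt0.
have Ay := rayleigh_ge a_orthonormal al_noninc ya.
have By := rayleigh_le b_orthonormal be_noninc yb.
have := BA_quad y; rewrite mulmxBl dotBr ler_norml => /andP[BAy _].
rewrite -subr_ge0 -(pmulr_lge0 _ yy_gt0) !mulrBl; lra.
Qed.

End Weyl.

Lemma weyl_inequality (R : realType) (n : nat) (k : 'I_n)
    (a b : 'I_n -> 'cV[R]_n) (al be : 'I_n -> R) (e : R) :
  (forall i j, (a i)^T *m a j = (i == j)%:R%:M) ->
  (forall i j, (b i)^T *m b j = (i == j)%:R%:M) ->
  (forall i j : 'I_n, (i <= j)%N -> al j <= al i) ->
  (forall i j : 'I_n, (i <= j)%N -> be j <= be i) ->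
  (forall y, `|dot y ((\sum_i be i *: (b i *m (b i)^T)
                       - \sum_i al i *: (a i *m (a i)^T)) *m y)| <= e * dot y y) ->
  `|be k - al k| <= e.
Proof.
move=> ao bo aln ben BA; rewrite ler_norml.
have AB y : `|dot y ((\sum_i al i *: (a i *m (a i)^T)
                     - \sum_i be i *: (b i *m (b i)^T)) *m y)| <= e * dot y y.
  by rewrite -opprB mulNmx dotNr normrN.
have := weyl_lower_bound k ao aln bo ben BA.
have := weyl_lower_bound k bo ben ao aln AB.
lra.
Qed.

Lemma neumann_remainder (R : pzRingType) (n : nat) (D : 'M[R]_n) (x b : 'cV[R]_n)
    (j : nat) :
  x = - b - D *m x ->
  x + (\sum_(m < j.+1) (-1) ^+ m *: D ^+ m) *m b = (-1) ^+ j.+1 *: (D ^+ j.+1 *m x).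
Proof.
move=> xE; have xbD : x + b = - (D *m x) by rewrite {1}xE addrAC addNr add0r.
elim: j => [|j IH].
  by rewrite big_ord1 expr0 scale1r mul1mx !expr1 scaleN1r.
rewrite big_ord_recr /= mulmxDl addrA IH -scalemxAl -scalerDr -mulmxDr xbD.
rewrite mulmxN mulmxA.
have -> : D ^+ j.+1 *m D = D ^+ j.+2 by rewrite [RHS]exprSr.
by rewrite scalerN -scaleNr -mulN1r -exprS.
Qed.

Section Contraction.
Variables (R : realType) (n : nat) (D : 'M[R]_n) (q : R).
Hypothesis q_ge0 : 0 <= q.
Hypothesis D_contraction : forall z, vnorm (D *m z) <= q * vnorm z.

Lemma vnorm_exp_mulmx_le m z : vnorm (D ^+ m *m z) <= q ^+ m * vnorm z.
Proof.
elim: m z => [|m IH] z; first by rewrite !expr0 mul1mx mul1r.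
have -> : D ^+ m.+1 *m z = D *m (D ^+ m *m z) by rewrite mulmxA exprS.
rewrite exprS -mulrA.
by apply: le_trans (D_contraction _) _; rewrite ler_wpM2l.
Qed.

Hypothesis q_lt1 : q < 1.

Lemma vnorm_fixpoint_le x b : x = - b - D *m x -> vnorm x <= vnorm b / (1 - q).
Proof.
move=> xE; rewrite ler_pdivlMr ?subr_gt0 // mulrBr mulr1 lerBlDr.
have : vnorm x <= vnorm b + q * vnorm x.
  by rewrite {1}xE; apply: le_trans (vnormB _ _) _; rewrite vnormN lerD2l.
by rewrite mulrC; lra.
Qed.

Lemma vnorm_neumann_remainder_le x b j : x = - b - D *m x ->
  vnorm (x + (\sum_(m < j.+1) (-1) ^+ m *: D ^+ m) *m b)
    <= q ^+ j.+1 * (vnorm b / (1 - q)).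
Proof.
move=> xE; rewrite (neumann_remainder _ xE) vnormZ normrX normrN1 expr1n mul1r.
apply: le_trans (vnorm_exp_mulmx_le _ _) _.
by rewrite ler_wpM2l ?exprn_ge0 ?vnorm_fixpoint_le.
Qed.

End Contraction.

Section Resolvent.
Variables (R : realType) (n : nat) (M : 'M[R]_n) (lam : 'I_n -> R)
  (u : 'I_n -> 'cV[R]_n) (k : 'I_n).
Hypothesis u_orthonormal : forall i j, (u i)^T *m u j = (i == j)%:R%:M.
Hypothesis M_spec : M = \sum_i lam i *: (u i *m (u i)^T).
Hypothesis lam_simple : forall i, i != k -> lam i != lam k.
Let Rk := \sum_(i < n | i != k) (lam i - lam k)^-1 *: (u i *m (u i)^T).

Lemma resolvent_shift z : Rk *m (((lam k)%:M - M) *m z) = dot (u k) z *: u k - z.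
Proof.
apply: (orthonormal_coord_inj u_orthonormal) => l.
rewrite dot_spectral_mulmx // mulmxBl mul_scalar_mx dotBr dotZr M_spec.
rewrite dot_spectral_mulmx //= dotBr dotZr dot_orthonormal // eq_sym.
have [->|lk] := eqVneq l k; first by rewrite mul0r mulr1 subrr.
have lamlk : lam l - lam k != 0 by rewrite subr_eq0 lam_simple.
by rewrite mulr0 sub0r /= -mulrBl mulrA -(opprB (lam l)) mulrN mulVf // mulN1r.
Qed.

Lemma resolvent_eigvec : Rk *m u k = 0.
Proof.
apply: (orthonormal_coord_inj u_orthonormal) => l.
rewrite dot_spectral_mulmx // dot0r dot_orthonormal //.
by case: eqVneq => [->|_]; rewrite /= ?mul0r ?mulr0.
Qed.

Lemma eigvec_fixpoint (S : 'M[R]_n) (mu : R) (v : 'cV[R]_n) :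
  S *m v = mu *: v -> v^T *m u k = 1%:M ->
  let E := S - M in
  v - u k = - (Rk *m E *m u k) - Rk *m (E - (mu - lam k)%:M) *m (v - u k).
Proof.
move=> Sv vu E.
have ukv : dot (u k) v = 1.
  by move/matrixP: vu => /(_ 0 0); rewrite trmx_mul_dot !mxE /= mulr1n dotC.
have shiftE z : (E - (mu - lam k)%:M) *m z = ((lam k)%:M - M) *m z + (S *m z - mu *: z).
  by rewrite !mulmxBl !mul_scalar_mx scalerBl opprB addrACA [RHS]addrACA (addrC (_ *: z)).
have Delta_v : Rk *m (E - (mu - lam k)%:M) *m v = u k - v.
  by rewrite -mulmxA shiftE Sv subrr addr0 resolvent_shift ukv scale1r.
have Delta_uk : Rk *m (E - (mu - lam k)%:M) *m u k = Rk *m E *m u k.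
  by rewrite -!mulmxA mulmxBl mul_scalar_mx mulmxBr -scalemxAr resolvent_eigvec scaler0 subr0.
by rewrite (mulmxBr _ v) Delta_v Delta_uk opprB addrA addNr add0r opprB.
Qed.

End Resolvent.

Section ResolventBound.
Variables (R : realType) (n : nat) (lam : 'I_n -> R) (u : 'I_n -> 'cV[R]_n) (k : 'I_n).
Variables (d e : R) (E : 'M[R]_n).
Hypothesis u_orthonormal : forall i j, (u i)^T *m u j = (i == j)%:R%:M.
Hypothesis d_gt0 : 0 < d.
Hypothesis gap : forall i, i != k -> d <= `|lam i - lam k|.
Hypothesis E_le : forall z, vnorm (E *m z) <= e * vnorm z.
Let Rk := \sum_(i < n | i != k) (lam i - lam k)^-1 *: (u i *m (u i)^T).

Lemma vnorm_resolvent_le z : vnorm (Rk *m z) <= d^-1 * vnorm z.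
Proof.
apply: vnorm_spectral_mulmx_le => // [|i ik]; first by rewrite invr_ge0 ltW.
by rewrite normfV lef_pV2 ?posrE ?gap // (lt_le_trans d_gt0 (gap ik)).
Qed.

Lemma vnorm_resolvent_mulmx_le z : vnorm (Rk *m (E *m z)) <= e / d * vnorm z.
Proof.
have -> : e / d * vnorm z = d^-1 * (e * vnorm z) by ring.
apply: le_trans (vnorm_resolvent_le _) _.
by apply: ler_wpM2l; [rewrite invr_ge0 ltW | exact: E_le].
Qed.

Lemma vnorm_resolvent_shift_le c z :
  `|c| <= e -> vnorm (Rk *m (E - c%:M) *m z) <= 2 * e / d * vnorm z.
Proof.
move=> c_le; rewrite -mulmxA mulmxBl mul_scalar_mx.
have -> : 2 * e / d * vnorm z = d^-1 * (e * vnorm z + e * vnorm z) by ring.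
apply: le_trans (vnorm_resolvent_le _) _.
apply: ler_wpM2l; first by rewrite invr_ge0 ltW.
apply: le_trans (vnormB _ _) _; rewrite vnormZ; apply: lerD; first exact: E_le.
by apply: ler_wpM2r; rewrite ?vnorm_ge0.
Qed.

End ResolventBound.

Lemma eig_gap_le (R : realType) (n : nat) (lam : 'I_n -> R) (k i : 'I_n) :
  i != k -> eig_gap lam k <= `|lam i - lam k|.
Proof.
move=> ik; apply: ge_inf; last by exists i.
by exists 0 => _ [l _ <-]; exact: normr_ge0.
Qed.

Theorem theorem2 (R : realType) (n : nat)
    (M : 'M[R]_n) (lam : 'I_n -> R) (u : 'I_n -> 'cV[R]_n)
    (lam_decr : forall i j : 'I_n, (i < j)%N -> lam j < lam i)
    (u_orthonormal : forall i j : 'I_n, (u i)^T *m u j = (i == j)%:R%:M)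
    (M_spec : M = \sum_(i < n) lam i *: (u i *m (u i)^T))
    (p : R) (p_gt0 : 0 < p) (p_lt1 : p < 1)
    (Q : 'M[R]_n) (Q_sym : Q^T = Q)
    (Q_vals : forall i j, Q i j = 0 \/ Q i j = p^-1)
    (k : 'I_n)
    (* k-th eigenvalue of S = M o Q, via a spectral decomposition of S with
       eigenvalues listed in nonincreasing order *)
    (mu : 'I_n -> R) (w : 'I_n -> 'cV[R]_n)
    (mu_noninc : forall i j : 'I_n, (i <= j)%N -> mu j <= mu i)
    (w_orthonormal : forall i j : 'I_n, (w i)^T *m w j = (i == j)%:R%:M)
    (S_spec : hadamard M Q = \sum_(i < n) mu i *: (w i *m (w i)^T))
    (v : 'cV[R]_n)
    (v_eig : hadamard M Q *m v = mu k *: v)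
    (v_norml : (v^T *m u k) = 1%:M)
    (j : nat) :
  let S := hadamard M Q in
  let E := S - M in
  let Rk := \sum_(i < n | i != k) (lam i - lam k)^-1 *: (u i *m (u i)^T) in
  let Delta := Rk *m (E - (mu k - lam k)%:M) in
  let d := eig_gap lam k in
  specnorm E < d / 2 ->
  vnorm (v - u k + (\sum_(m < j.+1) ((-1) ^+ m *: Delta ^+ m)) *m Rk *m E *m u k)
    <= 2^-1 * (2 * specnorm E / d) ^+ (j + 2) * (1 - 2 * specnorm E / d)^-1.
Proof.
move=> S E Rk Delta d; set e := specnorm E; set q := 2 * e / d => E_lt.
have uk1 : vnorm (u k) = 1 by rewrite vnormE dot_orthonormal // eqxx sqrtr1.
have e_ge0 : 0 <= e := specnorm_ge0 E uk1.
have d_gt0 : 0 < d by lra.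
have q_ge0 : 0 <= q by apply: divr_ge0; [apply: mulr_ge0 | apply: ltW].
have q_lt1 : q < 1 by rewrite /q ltr_pdivrMr // mul1r; lra.
have gap i : i != k -> d <= `|lam i - lam k| by apply: eig_gap_le.
have lam_simple i : i != k -> lam i != lam k.
  by move=> ik; rewrite -subr_eq0 -normr_gt0 (lt_le_trans d_gt0) ?gap.
have lam_noninc (i l : 'I_n) : (i <= l)%N -> lam l <= lam i.
  by rewrite leq_eqVlt => /orP[/eqP/val_inj->|/lam_decr/ltW].
have shift_le : `|mu k - lam k| <= e.
  apply: weyl_inequality u_orthonormal w_orthonormal lam_noninc mu_noninc _ => y.
  by rewrite -S_spec -M_spec; apply: normr_dot_mulmx_le uk1.
have E_le z : vnorm (E *m z) <= e * vnorm z := vnorm_mulmx_le E uk1 z.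
have Delta_le z : vnorm (Delta *m z) <= q * vnorm z :=
  vnorm_resolvent_shift_le u_orthonormal d_gt0 gap E_le z shift_le.
have b_le : vnorm (Rk *m (E *m u k)) <= e / d.
  have := vnorm_resolvent_mulmx_le u_orthonormal d_gt0 gap E_le (u k).
  by rewrite uk1 mulr1.
have -> : 2^-1 * q ^+ (j + 2) * (1 - q)^-1 = q ^+ j.+1 * (e / d / (1 - q)).
  have -> : e / d = 2^-1 * q by rewrite /q !mulrA mulVf ?mul1r ?pnatr_eq0.
  by rewrite addn2 exprSr; ring.
have := vnorm_neumann_remainder_le q_ge0 Delta_le q_lt1 j
  (eigvec_fixpoint u_orthonormal M_spec lam_simple v_eig v_norml).
rewrite -!mulmxA => /le_trans; apply.
apply: ler_wpM2l; first exact: exprn_ge0.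
by apply: ler_wpM2r; [rewrite invr_ge0 subr_ge0 ltW | exact: b_le].
Qed.
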